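(* Let $\mathbb{P}$ be a pre-Pawlikowski lattice and let $\sigma$ be a strategy for Player I in the game $\mathsf{G}_{\mathrm{fin}}(\mathbb{V}_1,\mathbb{V}_1)$. If $\mathsf{S}_{\mathrm{fin}}(\mathbb{V}_1,\mathbb{V}_1)$ holds, then there is a play $(A_0,F_0,A_1,F_1,\dots)$ according to $\sigma$ such that for every $p\in\mathbb{P}\setminus\{1\}$ we have $\sup F_n\not\leq p$ for infinitely many $n$.
   Context: A lattice is a poset where any two elements have a supremum and an infimum; it is bounded if it has a minimum $0$ and a maximum $1$. A prime element is $q\neq 1$ with: $a\wedge b\leq q$ implies $a\leq q$ or $b\leq q$. Enough prime elements: whenever $a\not\leq b$ there is a prime $q$ with $b\leq q$, $a\not\leq q$. A pre-Pawlikowski lattice is a bounded lattice with enough prime elements. $\mathbb{V}_1$ is the family of subsets $A\subseteq\mathbb{P}$ with $\sup A=1$. $\mathsf{S}_{\mathrm{fin}}(\mathbb{V}_1,\mathbb{V}_1)$: for every sequence $(A_n)_{n\in\omega}$ in $\mathbb{V}_1$ there are finite $F_n\subseteq A_n$ with $\sup\bigcup_n F_n=1$. The game $\mathsf{G}_{\mathrm{fin}}(\mathbb{V}_1,\mathbb{V}_1)$: in inning $n\in\omega$ Player I plays $A_n\in\mathbb{V}_1$ and Player II responds with a finite $F_n\subseteq A_n$; II wins if $\sup\bigcup_n F_n=1$. A strategy for Player I assigns Player I's move to each finite sequence of Player II's previous moves; a play is according to $\sigma$ if each $A_n$ is the value of $\sigma$ at $(F_0,\dots,F_{n-1})$. For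 a finite set $F$, $\sup F$ is its join (with $\sup\emptyset=0$). *)

From HB Require Import structures.
From mathcomp Require Import all_boot all_order.
Set Implicit Arguments. Unset Strict Implicit. Unset Printing Implicit Defensive.
Import Order.Theory.
Local Open Scope order_scope.

Section Defs.
Context {d : Order.disp_t} {T : tbLatticeType d}.

Definition is_sup (A : T -> Prop) (s : T) : Prop :=
  (forall a, A a -> a <= s) /\ (forall u, (forall a, A a -> a <= u) -> s <= u).

Definition V1 (A : T -> Prop) : Prop := is_sup A \top.

(* join of a finite set (represented by a list); join of [::] is \bot *)
Definition fsup (F : seq T) : T := \join_(x <- F) x.

Definition prime_elt (q : T) : Prop :=
  q != \top /\ forall a b, a `&` b <= q -> a <= q \/ b <= q.

Definition enough_primes : Prop :=
  forall a b : T, ~~ (a <= b) -> exists q, prime_elt q /\ b <= q /\ ~~ (a <= q).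

Definition Sfin_V1 : Prop :=
  forall A : nat -> (T -> Prop), (forall n, V1 (A n)) ->
  exists F : nat -> seq T, (forall n x, x \in F n -> A n x) /\
    V1 (fun x => exists n, x \in F n).

(* strategy for Player I in G_fin(V_1,V_1): maps the finite sequence of
   Player II's previous moves to a move in V_1 *)
Definition strategyI (sigma : seq (seq T) -> (T -> Prop)) : Prop :=
  forall h, V1 (sigma h).

(* the play with Player II's moves F is according to sigma:
   A_n = sigma (F_0,...,F_{n-1}) and F_n is a finite subset of A_n *)
Definition play_by (sigma : seq (seq T) -> (T -> Prop)) (F : nat -> seq T) : Prop :=
  forall n x, x \in F n -> sigma [seq F i | i <- iota 0 n] x.

End Defs.

(* Applying S_fin to the constant sequence sigma h gives, for every history h,
   finite sets R h 0 ⊆ R h 1 ⊆ ... ⊆ sigma h whose joins eventually leave every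
   q ≠ 1; Player II always answers with some R h k.  Let a_m(k) (guarantee m k)
   be the meet of sup R h k over the finitely many histories h produced by index
   sequences of length and entries at most m.  Primes split finite meets, so a_m
   eventually leaves every prime, and so does c_m(k) = ⋁_{j ≤ k} a_m(j) ∧ a_j(k)
   (two_blocks m k).  Applying S_fin to the tails of the sequence of chains
   (c_m)_m yields g such that, for each prime q, c_n(g n) ≰ q for infinitely
   many n.  Cut ℕ at block ends x_0 < x_1 < ... with g n ≤ x_(k+2) whenever
   n ≤ x_(k+1): a split point j witnessing c_n(g n) ≰ q with x_k ≤ n shows
   a_(x_i)(x_(i+1)) ≰ q for some i ≥ k.  Hence answering inning i with
   R h (x_(i+1)) makes infinitely many answers leave every prime, and, there
   being enough primes, every p ≠ 1. *)

From HB Require Import structures.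
From mathcomp Require Import all_boot all_order.
From Stdlib Require Import ClassicalEpsilon.
Import Order.Theory.

Fixpoint bounded_seqs (m l : nat) : seq (seq nat) :=
  if l is l'.+1 then [::] :: [seq i :: s | i <- iota 0 m.+1, s <- bounded_seqs m l']
  else [:: [::]].

Lemma mem_bounded_seqs m l s : (s \in bounded_seqs m l) = (size s <= l) && all (leq^~ m) s.
Proof.
elim: l s => [|l IH] [|i s]; rewrite ?mem_seq1 // in_cons.
rewrite [size _]/= ltnS [all _ _]/= andbCA -IH.
apply/orP/andP => [[//|/allpairsPdep [j [t [jm ts [-> ->]]]]]|[im st]].
  by move: jm; rewrite mem_iota add0n ltnS.
by right; apply: allpairs_f_dep; rewrite // mem_iota add0n ltnS.
Qed.

Lemma incr_ge_id {x : nat -> nat} : (forall k, x k < x k.+1) -> forall k, k <= x k.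
Proof. by move=> x_lt; elim=> // k IH; apply: leq_ltn_trans IH (x_lt k). Qed.

Lemma find_block {x : nat -> nat} {K n : nat} :
  (forall k, x k < x k.+1) -> x K <= n -> exists2 k, K <= k & x k <= n < x k.+1.
Proof.
move=> x_lt xK_n.
have bounded k : x k <= n -> k <= n by exact: leq_trans (incr_ge_id x_lt k).
have [k xk_n k_max] := ex_maxnP (ex_intro (fun k => x k <= n) K xK_n) bounded.
exists k; first exact: k_max.
by rewrite xk_n ltnNge; apply/negP => /k_max; rewrite ltnn.
Qed.

Fixpoint block_end (g : nat -> nat) (k : nat) : nat :=
  if k is k'.+1 then maxn (block_end g k').+1 (\max_(n < (block_end g k').+1) g n)
  else 0.

Lemma block_end_lt g k : block_end g k < block_end g k.+1.
Proof. exact: leq_maxl. Qed.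

Lemma block_end_homo g : {homo block_end g : i j / i <= j}.
Proof. exact: homo_leq leqnn leq_trans (fun k => ltnW (block_end_lt g k)). Qed.

Lemma block_end_dominates g k n : n <= block_end g k.+1 -> g n <= block_end g k.+2.
Proof.
rewrite -ltnS => n_lt; apply: leq_trans (leq_maxr _ _).
exact: (leq_bigmax (F := fun i : 'I__ => g i) (Ordinal n_lt)).
Qed.

Lemma block_ends_often (g : nat -> nat) (P : nat -> nat -> Prop) :
  (forall m m' k k', m' <= m -> k <= k' -> P m k -> P m' k') ->
  (forall N, exists2 n, N <= n & exists j, P n j /\ P j (g n)) ->
  forall K, exists2 i, K <= i & P (block_end g i) (block_end g i.+1).
Proof.
move=> P_mono often K; have [n xK_n [j [Pnj Pjg]]] := often (block_end g K).
have [k K_k /andP [xk_n n_lt]] := find_block (block_end_lt g) xK_n.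
(* n lies in the block [x_k, x_(k+1)) and g n <= x_(k+2), so j splits
   [x_k, x_(k+2)] at a point of one of the two blocks. *)
have P1 : P (block_end g k) j := P_mono _ _ _ _ xk_n (leqnn j) Pnj.
have P2 : P j (block_end g k.+2).
  by apply: (P_mono _ _ _ _ (leqnn j) _ Pjg); apply/block_end_dominates/ltnW.
have [j_le | j_gt] := leqP j (block_end g k.+1).
  by exists k => //; apply: P_mono (leqnn _) j_le P1.
by exists k.+1; [apply: leqW | apply: P_mono (ltnW j_gt) (leqnn _) P2].
Qed.

Local Open Scope order_scope.

Section Lattice.
Context {d : Order.disp_t} {T : tbLatticeType d}.

Lemma le_nle_trans {x y q : T} : x <= y -> ~~ (x <= q) -> ~~ (y <= q).
Proof. by move=> xy; apply: contra => /(le_trans xy). Qed.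

Lemma V1_escapes {A : T -> Prop} {q : T} :
  V1 A -> q != \top -> exists2 a, A a & ~~ (a <= q).
Proof.
move=> [_ A_least] q_top; apply: NNPP => no_escape.
suff : \top <= q by rewrite le1x (negbTE q_top).
by apply: A_least => a Aa; apply: contraT => aq; case: no_escape; exists a.
Qed.

Lemma prime_above {p : T} :
  @enough_primes d T -> p != \top -> exists2 q, prime_elt q & p <= q.
Proof.
by move=> primes; rewrite -le1x => /primes [q [q_prime [pq _]]]; exists q.
Qed.

Lemma V1_by_primes (A : T -> Prop) : @enough_primes d T ->
  (forall q, prime_elt q -> exists2 a, A a & ~~ (a <= q)) -> V1 A.
Proof.
move=> primes escape; split=> [a _|u u_ub]; first exact: lex1.
apply: contraT; rewrite le1x => /(prime_above primes) [q /escape [a Aa aq] uq].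
by move: aq; rewrite (le_trans (u_ub a Aa) uq).
Qed.

Lemma prime_meet_nle {q x y : T} :
  prime_elt q -> ~~ (x <= q) -> ~~ (y <= q) -> ~~ (x `&` y <= q).
Proof. by move=> [_ q_prime] xq yq; apply/negP => /q_prime []; exact/negP. Qed.

Lemma homo_bigmeet {I : Type} {r : seq I} {u : I -> nat -> T} {k l : nat} :
  (forall i, {homo u i : k l / (k <= l)%N >-> k <= l}) ->
  (k <= l)%N -> \meet_(i <- r) u i k <= \meet_(i <- r) u i l.
Proof.
move=> u_homo kl.
by elim/big_ind2: _ => // [x1 x2 y1 y2 ? ?|i _]; [exact: leI2 | exact: u_homo].
Qed.

Lemma bigmeet_escapes {I : Type} (r : seq I) (u : I -> nat -> T) (q : T) :
  prime_elt q -> (forall i, {homo u i : k l / (k <= l)%N >-> k <= l}) ->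
  (forall i, exists k, ~~ (u i k <= q)) ->
  exists k, ~~ (\meet_(i <- r) u i k <= q).
Proof.
move=> q_prime u_homo escape; elim: r => [|i r [k IH]].
  by exists 0%N; rewrite big_nil le1x; case: q_prime.
have [l il] := escape i; exists (maxn k l); rewrite big_cons.
apply: prime_meet_nle => //.
  by apply: le_nle_trans _ il; apply: u_homo; rewrite leq_maxr.
by apply: le_nle_trans _ IH; apply: homo_bigmeet; rewrite ?leq_maxl.
Qed.

Lemma Sfin_V1_tails {A : nat -> T -> Prop} :
  @Sfin_V1 d T -> (forall n, V1 (A n)) ->
  exists F : nat -> seq T, (forall n x, x \in F n -> A n x) /\
    forall N, V1 (fun x => exists2 n, (N <= n)%N & x \in F n).
Proof.
move=> Sfin A_V1.
have /choice [G G_sel] : forall N, exists G : nat -> seq T,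
    (forall m x, x \in G m -> A (N + m)%N x) /\ V1 (fun x => exists m, x \in G m).
  by move=> N; apply: Sfin => m; apply: A_V1.
exists (fun n => flatten [seq G i (n - i)%N | i <- iota 0 n.+1]); split.
  move=> n x /flatten_mapP [i]; rewrite mem_iota add0n ltnS => /andP [_ i_n].
  by move/(proj1 (G_sel i)); rewrite subnKC.
move=> N; split=> [x _|u u_ub]; first exact: lex1.
apply: (proj2 (proj2 (G_sel N))) => x [m x_in]; apply: u_ub.
exists (N + m)%N; first exact: leq_addr.
by apply/flatten_mapP; exists N; rewrite ?mem_iota ?add0n ?ltnS ?leq_addr // addKn.
Qed.

Lemma Sfin_V1_chain {A : T -> Prop} : @Sfin_V1 d T -> V1 A ->
  exists R : nat -> seq T, [/\ forall k x, x \in R k -> A x,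
    forall k l, (k <= l)%N -> fsup (R k) <= fsup (R l) &
    forall q, q != \top -> exists k, ~~ (fsup (R k) <= q)].
Proof.
move=> Sfin A_V1; have [E [E_sel E_V1]] := Sfin (fun=> A) (fun=> A_V1).
exists (fun k => flatten [seq E i | i <- iota 0 k.+1]); split.
- by move=> k x /flatten_mapP [i _ /E_sel].
- move=> k l kl; apply/joinsP_seq => x /flatten_mapP [i]; rewrite mem_iota add0n ltnS.
  move=> /andP [_ ik] xi _; apply: joins_sup_seq => //; apply/flatten_mapP.
  by exists i; rewrite // mem_iota add0n ltnS (leq_trans ik kl).
- move=> q q_top; have [x [n xn] xq] := V1_escapes E_V1 q_top.
  exists n; apply: le_nle_trans _ xq; apply: joins_sup_seq => //.
  by apply/flatten_mapP; exists n; rewrite // mem_iota add0n ltnSn.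
Qed.

End Lattice.

Lemma homo_bound_seq {d : Order.disp_t} {P : porderType d} (u : nat -> P) (s : seq P) :
  {homo u : k l / (k <= l)%N >-> k <= l} ->
  (forall x, x \in s -> exists k, x = u k) -> exists K, forall x, x \in s -> x <= u K.
Proof.
move=> u_homo; elim: s => [|x s IH] in_range; first by exists 0%N.
have [K HK] : exists K, forall y, y \in s -> y <= u K.
  by apply: IH => y ys; apply: in_range; rewrite in_cons ys orbT.
have [k ->] := in_range x (mem_head x s).
exists (maxn K k) => y; rewrite in_cons => /predU1P [->|ys].
  by apply: u_homo; rewrite leq_maxr.
by apply: le_trans (HK y ys) _; apply: u_homo; rewrite leq_maxl.
Qed.

Section Play.
Context {d : Order.disp_t} {T : tbLatticeType d}.
Variables (sigma : seq (seq T) -> T -> Prop) (R : seq (seq T) -> nat -> seq T).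
Hypothesis R_sel : forall h k x, x \in R h k -> sigma h x.
Hypothesis R_homo : forall h k l, (k <= l)%N -> fsup (R h k) <= fsup (R h l).
Hypothesis R_escapes : forall h q, q != \top -> exists k, ~~ (fsup (R h k) <= q).

Definition history (s : seq nat) : seq (seq T) :=
  foldl (fun h k => rcons h (R h k)) [::] s.

Definition guarantee (m k : nat) : T :=
  \meet_(s <- bounded_seqs m m) fsup (R (history s) k).

Definition two_blocks (m k : nat) : T :=
  \join_(j <- iota 0 k.+1) (guarantee m j `&` guarantee j k).

Lemma history_rcons s k : history (rcons s k) = rcons (history s) (R (history s) k).
Proof. by rewrite /history foldl_rcons. Qed.

Lemma guarantee_homo m k l : (k <= l)%N -> guarantee m k <= guarantee m l.
Proof. exact: homo_bigmeet (fun s => R_homo (history s)). Qed.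

Lemma guarantee_anti m m' k : (m <= m')%N -> guarantee m' k <= guarantee m k.
Proof.
move=> mm'; apply/meetsP_seq => s s_m _; apply: meets_inf_seq => //.
move: s_m; rewrite !mem_bounded_seqs => /andP [sm alls]; rewrite (leq_trans sm mm') /=.
by apply/allP => i /(allP alls) im; apply: leq_trans mm'.
Qed.

Lemma guarantee_le m k s : s \in bounded_seqs m m -> guarantee m k <= fsup (R (history s) k).
Proof. by move=> s_m; apply: meets_inf_seq. Qed.

Lemma guarantee_escapes m q : prime_elt q -> exists k, ~~ (guarantee m k <= q).
Proof.
move=> q_prime; apply: bigmeet_escapes (q_prime) _ _ => s; first exact: R_homo.
by apply: R_escapes; case: q_prime.
Qed.

Lemma two_blocks_homo m k l : (k <= l)%N -> two_blocks m k <= two_blocks m l.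
Proof.
move=> kl; apply/joinsP_seq => j; rewrite mem_iota add0n ltnS => /andP [_ jk] _.
apply: (joins_min_seq (x := j)); rewrite ?mem_iota ?add0n ?ltnS ?(leq_trans jk kl) //.
by apply: leI2 => //; apply: guarantee_homo.
Qed.

Lemma two_blocks_escapes m q : prime_elt q -> exists k, ~~ (two_blocks m k <= q).
Proof.
move=> q_prime; have [j mj] := guarantee_escapes m _ q_prime.
have [k jk] := guarantee_escapes j _ q_prime; exists (maxn j k).
have jK : ~~ (guarantee j (maxn j k) <= q).
  exact: le_nle_trans (guarantee_homo j _ _ (leq_maxr j k)) jk.
apply: le_nle_trans _ (prime_meet_nle q_prime mj jK).
rewrite /two_blocks; apply: (joins_sup_seq (fun i => guarantee m i `&` guarantee i _)) => //.
by rewrite mem_iota add0n ltnS leq_maxl.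
Qed.

Lemma two_blocks_split m k q : ~~ (two_blocks m k <= q) ->
  exists j, ~~ (guarantee m j <= q) /\ ~~ (guarantee j k <= q).
Proof.
move=> mkq; apply: NNPP => no_split; move/negP: mkq; apply; apply/joinsP_seq => j _ _.
have [mj|mj] := boolP (guarantee m j <= q); first exact: leIxl.
have [jk|jk] := boolP (guarantee j k <= q); first exact: leIxr.
by case: no_split; exists j.
Qed.

Hypothesis primes : @enough_primes d T.
Hypothesis Sfin : @Sfin_V1 d T.

Lemma two_blocks_often : exists g : nat -> nat, forall q, prime_elt q ->
  forall N, exists2 n, (N <= n)%N & ~~ (two_blocks n (g n) <= q).
Proof.
have A_V1 n : V1 (fun x => exists k, x = two_blocks n k).
  apply: V1_by_primes primes _ => q /(two_blocks_escapes n) [k nk].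
  by exists (two_blocks n k) => //; exists k.
have [F [F_sel F_V1]] := Sfin_V1_tails Sfin A_V1.
have /choice [g F_le] : forall n, exists K, forall x, x \in F n -> x <= two_blocks n K.
  by move=> n; apply: homo_bound_seq (F_sel n) => k l; apply: two_blocks_homo.
exists g => q [q_top q_prime] N; have [x [n Nn xn] xq] := V1_escapes (F_V1 N) q_top.
by exists n => //; apply: le_nle_trans (F_le n x xn) xq.
Qed.

Lemma play_escaping : exists F : nat -> seq T, play_by sigma F /\
  forall p : T, p != \top -> forall N, exists n, (N <= n)%N /\ ~~ (fsup (F n) <= p).
Proof.
have [g g_often] := two_blocks_often.
pose s n := [seq block_end g i.+1 | i <- iota 0 n].
pose F n := R (history (s n)) (block_end g n.+1).
have history_F n : [seq F i | i <- iota 0 n] = history (s n).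
  elim: n => // n IH.
  by rewrite /s -addn1 iotaD !map_cat IH /= !cats1 history_rcons.
exists F; split=> [n x|p /(prime_above primes) [q q_prime pq] N].
  by rewrite history_F; apply: R_sel.
have [i Ni block] :
    exists2 i, (N <= i)%N & ~~ (guarantee (block_end g i) (block_end g i.+1) <= q).
  apply: (block_ends_often g (fun m k => ~~ (guarantee m k <= q))) => [m m' k k' m'm kk'|M].
    apply: le_nle_trans.
    exact: le_trans (guarantee_anti _ _ k m'm) (guarantee_homo m' _ _ kk').
  have [n Mn /two_blocks_split [j jn]] := g_often q q_prime M.
  by exists n => //; exists j.
exists i; split=> //; move: block; apply: contra => Fp.
apply: le_trans (le_trans Fp pq); apply: guarantee_le.
rewrite mem_bounded_seqs size_map size_iota (incr_ge_id (block_end_lt g)) /=.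
apply/allP => y /mapP [j]; rewrite mem_iota add0n => /andP [_ ji] ->.
exact: block_end_homo.
Qed.

End Play.

Theorem proposition2p2 (d : Order.disp_t) (T : tbLatticeType d)
  (sigma : seq (seq T) -> (T -> Prop)) :
  @enough_primes d T -> strategyI sigma -> @Sfin_V1 d T ->
  exists F : nat -> seq T, play_by sigma F /\
    forall p : T, p != \top ->
      forall N, exists n, (N <= n)%N /\ ~~ (fsup (F n) <= p).
Proof.
move=> primes strategy Sfin.
have /choice [R R_chain] := fun h => Sfin_V1_chain Sfin (strategy h).
by apply: (@play_escaping _ _ sigma R _ _ _ primes Sfin) => h; case: (R_chain h).
Qed.
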